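(* Let $A$ be an $m$-dimensional permutation array of size $n_1\times\cdots\times n_m$, index set $\Lambda=[n_1]\times\cdots\times[n_m]$, and order $n$. If $|\mathcal{H}_A|-|H_\Lambda|<n-1$, then there is an $n_1\times\cdots\times n_m$ window in the periodic extension of $A$ which has a repeated difference vector.
   Context: For $n\in\mathbb{N}$, $[n]=\{1,\dots,n\}$; $m\ge2$, all $n_i\ge2$. A binary array $A:\Lambda\to\{0,1\}$ is an $m$-dimensional permutation array if there exist $k$ with $1\le k<m$ and a bijection $\varphi:[n_1]\times\cdots\times[n_k]\to[n_{k+1}]\times\cdots\times[n_m]$ such that $A(a_1,\dots,a_m)=1$ iff $\varphi(a_1,\dots,a_k)=(a_{k+1},\dots,a_m)$; points with value 1 are dots; the order is $n=n_1\cdots n_k=n_{k+1}\cdots n_m$. The periodic extension $\mathbb{A}:\mathbb{Z}^m\to\{0,1\}$ is $\mathbb{A}(a_1,\dots,a_m)=A(a_1',\dots,a_m')$ with $a_i'\in[n_i]$, $a_i'\equiv a_i\pmod{n_i}$; an $n_1\times\cdots\times n_m$ window is the restriction of $\mathbb{A}$ to a box $\prod_i\{k_i,\dots,k_i+n_i-1\}$, $k_i\in\mathbb{Z}$. The difference vector from dot $(a_i)$ to a distinct dot $(w_i)$ is $\langle w_i-a_i\rangle_i\in\mathbb{Z}^m$, the toroidal vector is $\langle (w_i-a_i)\bmod n_i\rangle_i$; a window has a repeated difference vector if two distinct ordered pairs of distinct dots in it have the same difference vector. $\mathcal{H}_A$ is the multiset (counted with multiplicity over ordered pairs of distinct dots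 of $A$) of toroidal vectors $\langle h_1,\dots,h_m\rangle$ of $A$ with $h_i=n_i/2$ for some $i$. With $Z_1=\mathbb{Z}_{n_1}\times\cdots\times\mathbb{Z}_{n_k}$, $Z_2=\mathbb{Z}_{n_{k+1}}\times\cdots\times\mathbb{Z}_{n_m}$, $T_\Lambda=(Z_1\times Z_2)\setminus((Z_1\times\{0\})\cup(\{0\}\times Z_2))$ and $H_\Lambda=\{\langle h_1,\dots,h_m\rangle\in T_\Lambda: h_i=n_i/2\text{ for some }i\in[m]\}$ (a set). *)

(* Coordinates are 0-based: [n_i] = {1..n_i} is rendered as
   {0..n_i-1}; the shift is harmless (translation-invariant notions only). *)
From mathcomp Require Import all_boot all_order all_algebra.
Set Implicit Arguments. Unset Strict Implicit. Unset Printing Implicit Defensive.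

Fixpoint boxseq (l : seq nat) : seq (seq nat) :=
  match l with
  | [::] => [:: [::]]
  | n :: l' => [seq x :: s | x <- iota 0 n, s <- boxseq l']
  end.

Definition is_perm_array (ns : seq nat) (A : seq nat -> bool)
    (k : nat) (phi : seq nat -> seq nat) : Prop :=
  [/\ 1 <= k < size ns,
      {in boxseq (take k ns), forall x, phi x \in boxseq (drop k ns)},
      {in boxseq (take k ns) &, injective phi},
      {in boxseq (drop k ns), forall y, exists2 x, x \in boxseq (take k ns) & phi x = y}
    & {in boxseq ns, forall a, A a = (phi (take k a) == drop k a)}].

Definition parray_order (ns : seq nat) (k : nat) : nat := \prod_(x <- take k ns) x.

Definition dots (ns : seq nat) (A : seq nat -> bool) : seq (seq nat) :=
  [seq a <- boxseq ns | A a].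

Definition toroidal (ns : seq nat) (a w : seq nat) : seq nat :=
  [seq (nth 0 w i + nth 0 ns i - nth 0 a i) %% nth 0 ns i | i <- iota 0 (size ns)].

Definition has_half (ns : seq nat) (h : seq nat) : bool :=
  has (fun i => (nth 0 h i).*2 == nth 0 ns i) (iota 0 (size ns)).

(* |H_A| : multiset count over ordered pairs of distinct dots *)
Definition card_HA (ns : seq nat) (A : seq nat -> bool) : nat :=
  size [seq p <- [seq (a, w) | a <- dots ns A, w <- dots ns A]
         | (p.1 != p.2) && has_half ns (toroidal ns p.1 p.2)].

Definition in_T (ns : seq nat) (k : nat) (h : seq nat) : bool :=
  has (fun x => x != 0) (take k h) && has (fun x => x != 0) (drop k h).

Definition card_HL (ns : seq nat) (k : nat) : nat :=
  size [seq h <- boxseq ns | in_T ns k h && has_half ns h].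

Definition periodic_ext (ns : seq nat) (A : seq nat -> bool) (x : seq int) : bool :=
  A [seq absz (intdiv.modz (nth (0:int) x i) (Posz (nth 0 ns i))) | i <- iota 0 (size ns)].

Definition in_window (ns : seq nat) (c x : seq int) : bool :=
  (size x == size ns) &&
  all (fun i => (nth (0:int) c i <= nth (0:int) x i)%R && (nth (0:int) x i < nth (0:int) c i + (nth 0 ns i)%:Z)%R)
      (iota 0 (size ns)).

Definition diffv (ns : seq nat) (p q : seq int) : seq int :=
  [seq (nth (0:int) q i - nth (0:int) p i)%R | i <- iota 0 (size ns)].

Definition window_has_repeat (ns : seq nat) (A : seq nat -> bool) (c : seq int) : Prop :=
  exists p q p' q' : seq int,
    [/\ [&& in_window ns c p, in_window ns c q, in_window ns c p' & in_window ns c q'],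
        [&& periodic_ext ns A p, periodic_ext ns A q, periodic_ext ns A p'
          & periodic_ext ns A q'],
        p != q /\ p' != q',
        (p, q) != (p', q')
      & diffv ns p q = diffv ns p' q'].

From Pilot Require Import Defs.
From mathcomp Require Import all_boot all_order all_algebra.
From mathcomp Require Import zify.
Set Implicit Arguments. Unset Strict Implicit. Unset Printing Implicit Defensive.

(* The n dots give n(n-1) ordered pairs of distinct dots, of which n(n-1) - |H_A|
   have a toroidal vector with no coordinate n_i/2.  Two distinct dots differ both
   in their Z_1 part and (phi being injective) in their Z_2 part, so these vectors
   lie in T_Lambda \ H_Lambda, which has at most (n-1)^2 - |H_Lambda| elements.
   The hypothesis therefore forces two distinct such pairs to share a toroidal
   vector h.  In each coordinate, since 2 h_i <> n_i, a window starting at one of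
   the four dots contains both pairs with difference h_i; these windows combine
   into a window of the periodic extension with a repeated difference vector. *)

Lemma mem_boxseq_cons n l x :
  x \in boxseq (n :: l) = (if x is y :: x' then (y < n) && (x' \in boxseq l) else false).
Proof.
apply/allpairsP/idP => [[[y s] /= [Hy Hs ->]]|].
  by rewrite Hs andbT; move: Hy; rewrite mem_iota add0n.
case: x => // y x' /andP[Hy Hx]; exists (y, x'); split => //=.
by rewrite mem_iota add0n.
Qed.

Lemma boxseqP l x :
  reflect (size x = size l /\ forall i, i < size l -> nth 0 x i < nth 0 l i)
          (x \in boxseq l).
Proof.
elim: l x => [|n l IH] x /=.
  rewrite inE; case: x => [|y x]; [by left|by right; case].
rewrite mem_boxseq_cons; case: x => [|y x]; first by right; case.
apply: (iffP andP) => [[Hy /IH [Hs Hn]]|[[Hs] Hn]]; split.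
- by rewrite /= Hs.
- by case => //= i /Hn.
- exact: (Hn 0).
- by apply/IH; split => // i Hi; apply: (Hn i.+1).
Qed.

Lemma uniq_boxseq l : uniq (boxseq l).
Proof.
elim: l => //= n l IH; apply: allpairs_uniq => //; first exact: iota_uniq.
by move=> [a b] [c d] _ _ /= [-> ->].
Qed.

Lemma size_boxseq l : size (boxseq l) = \prod_(x <- l) x.
Proof.
elim: l => [|n l IH]; first by rewrite big_nil.
by rewrite /= size_allpairs size_iota big_cons IH.
Qed.

Lemma mem_boxseq_cat l1 l2 u v : size u = size l1 ->
  (u ++ v \in boxseq (l1 ++ l2)) = (u \in boxseq l1) && (v \in boxseq l2).
Proof.
elim: l1 u => [|n l1 IH] [|y u] // Hs.
by rewrite cat_cons !mem_boxseq_cons IH ?andbA //; case: Hs.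
Qed.

Lemma boxseq_take_drop l k x : x \in boxseq l ->
  take k x \in boxseq (take k l) /\ drop k x \in boxseq (drop k l).
Proof.
move=> Hx; have Hs : size x = size l by case/boxseqP: Hx.
move: Hx; rewrite -{1}(cat_take_drop k x) -{1}(cat_take_drop k l) mem_boxseq_cat.
  by case/andP.
by rewrite !size_take Hs.
Qed.

Lemma boxseq_cat_take_drop l k u v : k <= size l ->
  u \in boxseq (take k l) -> v \in boxseq (drop k l) -> u ++ v \in boxseq l.
Proof.
move=> Hk Hu Hv; rewrite -(cat_take_drop k l) mem_boxseq_cat ?Hu ?Hv //.
by case/boxseqP: Hu.
Qed.

Lemma count_has_nz_boxseq l :
  count (has (fun x => x != 0)) (boxseq l) <= (size (boxseq l)).-1.
Proof.
case E: (boxseq l) => [|x0 s] //; rewrite -E.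
have /boxseqP[_ Hx0] : x0 \in boxseq l by rewrite E mem_head.
have Hzero : nseq (size l) 0 \in boxseq l.
  apply/boxseqP; rewrite size_nseq; split => // i Hi.
  by rewrite nth_nseq Hi; apply: leq_ltn_trans (Hx0 i Hi).
have Hnz : ~~ has (fun x => x != 0) (nseq (size l) 0).
  by apply/hasPn => x; rewrite mem_nseq => /andP[_ /eqP ->].
have : 0 < count (predC (has (fun x => x != 0))) (boxseq l).
  by rewrite -has_count; apply/hasP; exists (nseq (size l) 0).
have := count_predC (has (fun x => x != 0)) (boxseq l).
by move=> <- ?; rewrite -subn1 -addnBA ?leq_addr.
Qed.

Lemma count_distinct_pairs (T : eqType) (s : seq T) : uniq s ->
  count (fun p : T * T => p.1 != p.2) [seq (x, y) | x <- s, y <- s]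
  = size s * (size s).-1.
Proof.
move=> Us.
suff H s1 : {subset s1 <= s} ->
    count (fun p : T * T => p.1 != p.2) [seq (x, y) | x <- s1, y <- s]
    = size s1 * (size s).-1 by exact: H.
elim: s1 => [|x s1 IH] //= Hsub.
rewrite count_cat IH => [|y Hy]; last by apply: Hsub; rewrite inE Hy orbT.
rewrite count_map mulSn; congr (_ + _).
have Hx : x \in s by apply: Hsub; rewrite mem_head.
have := count_predC (pred1 x) s; rewrite (count_uniq_mem x Us) Hx.
rewrite (@eq_count _ _ (predC (pred1 x))) => [<- //|y /=].
by rewrite eq_sym.
Qed.

Lemma count_andC (T : Type) (a b : pred T) s :
  count (fun x => a x && b x) s + count (fun x => a x && ~~ b x) s = count a s.
Proof. by elim: s => //= x s <-; case: (a x); case: (b x); rewrite /=; lia. Qed.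

Lemma collision_of_not_uniq_map (T U : eqType) (f : T -> U) s :
  uniq s -> ~~ uniq (map f s) ->
  exists p p', [/\ p \in s, p' \in s, p != p' & f p = f p'].
Proof.
elim: s => //= x s IH /andP[xs Us] /nandP[/negbNE/mapP[y ys fxy]|].
  by exists x, y; rewrite mem_head inE ys orbT; split=> //; apply: contraNneq xs => ->.
case/(IH Us) => p [p' [ps p's pp' fpp']].
by exists p, p'; rewrite !inE ps p's !orbT.
Qed.

Lemma exists_seq_nth (P : nat -> nat -> Prop) m :
  (forall i, i < m -> exists c, P i c) ->
  exists2 cs, size cs = m & forall i, i < m -> P i (nth 0 cs i).
Proof.
elim: m => [|m IH] H; first by exists [::].
have [|cs Hsz Hcs] := IH => [i Hi|]; first by apply: H; apply: ltnW.
have [c Hc] := H m (ltnSn m).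
exists (rcons cs c) => [|i]; first by rewrite size_rcons Hsz.
rewrite ltnS leq_eqVlt nth_rcons Hsz => /orP[/eqP ->|Hi]; first by rewrite ltnn eqxx.
by rewrite Hi; apply: Hcs.
Qed.

Lemma modn_DnB_small n a w : a < n -> w < n ->
  (w + n - a) %% n = if a <= w then w - a else w + n - a.
Proof.
move=> Ha Hw; case: ifP => H.
  by rewrite -addnBAC // modnDr modn_small //; lia.
by rewrite modn_small //; lia.
Qed.

Lemma size_toroidal l a w : size (toroidal l a w) = size l.
Proof. by rewrite /toroidal size_map size_iota. Qed.

Lemma nth_toroidal l a w i : i < size l ->
  nth 0 (toroidal l a w) i = (nth 0 w i + nth 0 l i - nth 0 a i) %% nth 0 l i.
Proof. by move=> Hi; rewrite /toroidal (nth_map 0) ?size_iota // nth_iota. Qed.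

Lemma toroidal_take l k a w :
  take k (toroidal l a w) = toroidal (take k l) (take k a) (take k w).
Proof.
rewrite /toroidal -map_take take_iota size_take_min.
by apply/eq_in_map => i; rewrite mem_iota add0n ltn_min => /and3P[_ Hik _]; rewrite !nth_take.
Qed.

Lemma toroidal_drop l k a w :
  drop k (toroidal l a w) = toroidal (drop k l) (drop k a) (drop k w).
Proof.
rewrite /toroidal -map_drop drop_iota size_drop add0n -{1}(addn0 k) iotaDl -map_comp.
by apply/eq_in_map => i _; rewrite /= !nth_drop.
Qed.

Lemma toroidal_has_nz l a w : a \in boxseq l -> w \in boxseq l -> a != w ->
  has (fun x => x != 0) (toroidal l a w).
Proof.
case/boxseqP => Hsa Ha; case/boxseqP => Hsw Hw; apply: contraNT => /hasPn H0.
apply/eqP/(@eq_from_nth _ 0) => [|i]; first by rewrite Hsa Hsw.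
rewrite Hsa => Hi.
have : nth 0 (toroidal l a w) i \in toroidal l a w by rewrite mem_nth ?size_toroidal.
move/H0/negbNE/eqP; have := Ha i Hi; have := Hw i Hi.
move=> Hwi Hai; rewrite nth_toroidal // modn_DnB_small //; case: ifP => ?; lia.
Qed.

Lemma toroidal_in_boxseq l a w : a \in boxseq l -> toroidal l a w \in boxseq l.
Proof.
case/boxseqP => _ Ha; apply/boxseqP; rewrite size_toroidal; split => // i Hi.
by rewrite nth_toroidal // ltn_mod (leq_ltn_trans _ (Ha i Hi)).
Qed.

Lemma mem_dots_boxseq ns A x : x \in dots ns A -> x \in boxseq ns.
Proof. by rewrite mem_filter => /andP[]. Qed.

Definition nonhalf_pairs (ns : seq nat) (A : seq nat -> bool) : seq (seq nat * seq nat) :=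
  [seq p <- [seq (a, w) | a <- dots ns A, w <- dots ns A]
     | (p.1 != p.2) && ~~ has_half ns (toroidal ns p.1 p.2)].

Lemma mem_nonhalf_pairs ns A a w : ((a, w) \in nonhalf_pairs ns A) =
  [&& a \in dots ns A, w \in dots ns A, a != w & ~~ has_half ns (toroidal ns a w)].
Proof.
rewrite mem_filter /=; apply/andP/and4P => [[/andP[Haw Hh] /allpairsP[[x y] [Hx Hy]]]|].
  by case=> Ea Ew; rewrite Ea Ew in Haw Hh *.
by case=> Ha Hw Haw Hh; split; [apply/andP|apply/allpairsP; exists (a, w)].
Qed.

Lemma uniq_nonhalf_pairs ns A : uniq (nonhalf_pairs ns A).
Proof.
apply/filter_uniq/allpairs_uniq; try exact/filter_uniq/uniq_boxseq.
by move=> [x1 y1] [x2 y2] _ _ /= [-> ->].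
Qed.

Definition window_rep (n c x : nat) : nat := if c <= x then x else x + n.

(* In the window with corner [c], the pairs [(a, w)] and [(a', w')] have the same
   difference; stated additively to avoid truncated subtraction. *)
Definition aligned_corner (n c a w a' w' : nat) : Prop :=
  c < n /\ window_rep n c w + window_rep n c a' = window_rep n c w' + window_rep n c a.

Lemma window_rep_collision n a w a' w' :
  a < n -> w < n -> a' < n -> w' < n ->
  (w + n - a) %% n = (w' + n - a') %% n -> ((w + n - a) %% n).*2 != n ->
  exists c, aligned_corner n c a w a' w'.
Proof.
move=> Ha Hw Ha' Hw'; rewrite !modn_DnB_small // -addnn /aligned_corner /window_rep.
move Eh: (if a <= w then _ else _) => h Hh' Hh.
(* The window starts at a tail ([a] or [a']) when [2h < n] and at a head ([w] or
   [w']) otherwise; of the two, at the one from which the other pair is reached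
   without wrapping around. *)
have [Hlt|Hge] := ltnP (h + h) n.
  have [Hc|Hc] := ltnP ((if a <= a' then a' - a else a' + n - a) + h) n.
    by exists a => //; move: Eh Hh' Hc; repeat case: ifP; lia.
  by exists a' => //; move: Eh Hh' Hc; repeat case: ifP; lia.
have [Hc|Hc] := ltnP ((if w <= w' then w' - w else w' + n - w) + (n - h)) n.
  by exists w => //; move: Eh Hh' Hc Hh; repeat case: ifP; lia.
by exists w'=> //; move: Eh Hh' Hc Hh; repeat case: ifP; lia.
Qed.

Lemma window_corner_collision l a w a' w' :
  a \in boxseq l -> w \in boxseq l -> a' \in boxseq l -> w' \in boxseq l ->
  toroidal l a w = toroidal l a' w' -> ~~ has_half l (toroidal l a w) ->
  exists2 cs, size cs = size l & forall i, i < size l ->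
    aligned_corner (nth 0 l i) (nth 0 cs i) (nth 0 a i) (nth 0 w i) (nth 0 a' i) (nth 0 w' i).
Proof.
move=> /boxseqP[_ Ha] /boxseqP[_ Hw] /boxseqP[_ Ha'] /boxseqP[_ Hw'] Ht /hasPn Hh.
apply: (@exists_seq_nth (fun i c =>
  aligned_corner (nth 0 l i) c (nth 0 a i) (nth 0 w i) (nth 0 a' i) (nth 0 w' i))) => i Hi.
have := congr1 (nth 0 ^~ i) Ht; rewrite /= !nth_toroidal // => Hti.
have := Hh i; rewrite mem_iota add0n nth_toroidal // => /(_ Hi) Hhi.
exact: window_rep_collision (Ha i Hi) (Hw i Hi) (Ha' i Hi) (Hw' i Hi) Hti Hhi.
Qed.

Section WindowLift.
Variables (ns cs : seq nat).

Definition window_lift (x : seq nat) : seq int :=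
  [seq Posz (window_rep (nth 0 ns i) (nth 0 cs i) (nth 0 x i)) | i <- iota 0 (size ns)].

Lemma nth_window_lift x i : i < size ns ->
  nth 0%R (window_lift x) i = Posz (window_rep (nth 0 ns i) (nth 0 cs i) (nth 0 x i)).
Proof. by move=> Hi; rewrite /window_lift (nth_map 0) ?size_iota // nth_iota. Qed.

Lemma window_lift_periodic A x : x \in dots ns A -> periodic_ext ns A (window_lift x).
Proof.
rewrite mem_filter => /andP[HA /boxseqP[Hs Hx]].
rewrite /periodic_ext; move: HA; congr (is_true (A _)).
rewrite -[LHS](mkseq_nth 0 x) /mkseq Hs; apply/eq_in_map => i.
rewrite mem_iota add0n => Hi; rewrite nth_window_lift // modz_nat absz_nat /window_rep.
by case: ifP => _; rewrite ?modnDr modn_small //; apply: Hx.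
Qed.

Lemma window_lift_inj : {in boxseq ns &, injective window_lift}.
Proof.
move=> x y /boxseqP[Hsx Hx] /boxseqP[Hsy Hy] Heq.
apply: (@eq_from_nth _ 0) => [|i]; first by rewrite Hsx Hsy.
rewrite Hsx => Hi; have := congr1 (nth 0%R ^~ i) Heq; rewrite !nth_window_lift // => [[]].
have := Hx i Hi; have := Hy i Hi; rewrite /window_rep; case: ifP => ?; case: ifP => ?; lia.
Qed.

(* [Defs.diffv] is qualified because mathcomp's vector.v also defines [diffv]. *)
Lemma window_lift_diffv a w a' w' :
  (forall i, i < size ns -> aligned_corner (nth 0 ns i) (nth 0 cs i)
                              (nth 0 a i) (nth 0 w i) (nth 0 a' i) (nth 0 w' i)) ->
  Defs.diffv ns (window_lift a) (window_lift w)
  = Defs.diffv ns (window_lift a') (window_lift w').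
Proof.
move=> Hal; apply/eq_in_map => i; rewrite mem_iota add0n => /= Hi.
by rewrite !nth_window_lift //; have [_] := Hal i Hi; lia.
Qed.

Hypothesis size_cs : size cs = size ns.
Hypothesis cs_lt : forall i, i < size ns -> nth 0 cs i < nth 0 ns i.

Lemma window_lift_in_window x : x \in boxseq ns -> in_window ns (map Posz cs) (window_lift x).
Proof.
case/boxseqP => _ Hx; rewrite /in_window size_map size_iota eqxx /=.
apply/allP => i; rewrite mem_iota add0n => /= Hi.
rewrite nth_window_lift // (nth_map 0) ?size_cs //.
have := Hx i Hi; have := cs_lt Hi.
rewrite /window_rep lez_nat -PoszD ltz_nat -[(ns`_i)%R]/(nth 0 ns i).
case: ifP => ?; lia.
Qed.

End WindowLift.

Lemma window_repeat_of_collision ns A a w a' w' :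
  (a, w) \in nonhalf_pairs ns A -> (a', w') \in nonhalf_pairs ns A -> (a, w) != (a', w') ->
  toroidal ns a w = toroidal ns a' w' ->
  exists c, size c = size ns /\ window_has_repeat ns A c.
Proof.
rewrite !mem_nonhalf_pairs => /and4P[Ha Hw Haw Hh] /and4P[Ha' Hw' Haw' _] Hne Ht.
move: (mem_dots_boxseq Ha) (mem_dots_boxseq Hw) (mem_dots_boxseq Ha')
  (mem_dots_boxseq Hw') => ba bw ba' bw'.
have [cs size_cs Hcs] := window_corner_collision ba bw ba' bw' Ht Hh.
have cs_lt i : i < size ns -> nth 0 cs i < nth 0 ns i by case/Hcs.
have lift_inj := @window_lift_inj ns cs.
exists (map Posz cs); split; first by rewrite size_map.
exists (window_lift ns cs a), (window_lift ns cs w), (window_lift ns cs a'),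
  (window_lift ns cs w').
split; [by rewrite !window_lift_in_window|by rewrite !window_lift_periodic| | |
        exact: window_lift_diffv].
- by split; [apply: contra_neq Haw|apply: contra_neq Haw']; apply: lift_inj.
- by apply: contra_neq Hne => -[/(lift_inj _ _ ba ba') -> /(lift_inj _ _ bw bw') ->].
Qed.

Section PermArray.
Variables (ns : seq nat) (A : seq nat -> bool) (k : nat) (phi : seq nat -> seq nat).
Hypothesis pa : is_perm_array ns A k phi.
Let B1 := boxseq (take k ns).
Let B2 := boxseq (drop k ns).

Lemma perm_array_k_lt : k < size ns.
Proof. by case: pa => /andP[]. Qed.

Lemma size_boxseq_drop : size B2 = size B1.
Proof.
case: pa => _ Hmap Hinj Hsurj _; rewrite -(size_map phi B1).
apply/eqP; rewrite eqn_leq; apply/andP; split.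
  by apply: uniq_leq_size (uniq_boxseq _) _ => y /Hsurj [x Hx <-]; apply: map_f.
apply: uniq_leq_size; first by rewrite map_inj_in_uniq // uniq_boxseq.
by move=> y /mapP [x Hx ->]; apply: Hmap.
Qed.

Lemma dot_take_drop d :
  d \in dots ns A -> take k d \in B1 /\ drop k d = phi (take k d).
Proof.
rewrite mem_filter => /andP [HAd Hd]; case: pa => _ _ _ _ HA.
have [H1 H2] := boxseq_take_drop k Hd; split => //.
by move: HAd; rewrite HA // => /eqP.
Qed.

Lemma size_dots : size (dots ns A) = size B1.
Proof.
case: pa => _ Hmap _ _ HA.
have size_B1 u : u \in B1 -> size u = k.
  by case/boxseqP => -> _; rewrite size_takel // ltnW // perm_array_k_lt.
suff /perm_size -> : perm_eq (dots ns A) [seq u ++ phi u | u <- B1] by rewrite size_map.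
apply: uniq_perm; first exact/filter_uniq/uniq_boxseq.
  rewrite map_inj_in_uniq ?uniq_boxseq // => u v Hu Hv /(congr1 (take k)).
  by rewrite !take_size_cat ?size_B1.
move=> d; apply/idP/mapP => [Hd|[u Hu ->]].
  have [H1 H2] := dot_take_drop Hd; exists (take k d) => //.
  by rewrite -H2 cat_take_drop.
have Hin : u ++ phi u \in boxseq ns.
  by apply: boxseq_cat_take_drop (Hmap _ Hu) => //; apply/ltnW/perm_array_k_lt.
by rewrite mem_filter HA // take_size_cat ?size_B1 // drop_size_cat ?size_B1 // eqxx Hin.
Qed.

Lemma in_T_toroidal a w : a \in dots ns A -> w \in dots ns A -> a != w ->
  in_T ns k (toroidal ns a w).
Proof.
move=> Ha Hw Haw; have [Ha1 Ea] := dot_take_drop Ha; have [Hw1 Ew] := dot_take_drop Hw.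
have Htk : take k a != take k w.
  by apply: contra_neq Haw => E; rewrite -(cat_take_drop k a) -(cat_take_drop k w) Ea Ew E.
have Hdk : drop k a != drop k w.
  by apply: contra_neq Htk; rewrite Ea Ew; case: pa => _ _ Hinj _ _; apply: Hinj.
have [_ Ha2] := boxseq_take_drop k (mem_dots_boxseq Ha).
have [_ Hw2] := boxseq_take_drop k (mem_dots_boxseq Hw).
by rewrite /in_T toroidal_take toroidal_drop !toroidal_has_nz.
Qed.

Lemma count_in_T : count (in_T ns k) (boxseq ns) <= (size B1).-1 * (size B1).-1.
Proof.
pose nz := has (fun x : nat => x != 0).
rewrite -size_filter.
apply: (@leq_trans (size [seq u ++ v | u <- filter nz B1, v <- filter nz B2])).
  apply: uniq_leq_size; first exact/filter_uniq/uniq_boxseq.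
  move=> h; rewrite mem_filter => /andP [/andP[Ht Hd] Hh].
  have [Hh1 Hh2] := boxseq_take_drop k Hh.
  by rewrite -(cat_take_drop k h); apply: allpairs_f; rewrite mem_filter; apply/andP.
rewrite size_allpairs !size_filter -{2}size_boxseq_drop.
by apply: leq_mul; apply: count_has_nz_boxseq.
Qed.

Lemma card_HA_add_nonhalf :
  card_HA ns A + size (nonhalf_pairs ns A) = size B1 * (size B1).-1.
Proof.
rewrite -size_dots -count_distinct_pairs; last exact/filter_uniq/uniq_boxseq.
by rewrite /card_HA /nonhalf_pairs !size_filter count_andC.
Qed.

Lemma card_HL_add_le :
  uniq [seq toroidal ns p.1 p.2 | p <- nonhalf_pairs ns A] ->
  card_HL ns k + (size B1).-1 <= card_HA ns A.
Proof.
move=> Utor.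
have nonhalf_le :
    size (nonhalf_pairs ns A) <= count (fun h => in_T ns k h && ~~ has_half ns h) (boxseq ns).
  rewrite -size_filter -(size_map (fun p => toroidal ns p.1 p.2)).
  apply: uniq_leq_size Utor _ => _ /mapP[[a w] + ->].
  rewrite mem_nonhalf_pairs => /and4P[Ha Hw Haw Hh] /=.
  by rewrite mem_filter /= in_T_toroidal // Hh toroidal_in_boxseq // (mem_dots_boxseq Ha).
have := count_andC (in_T ns k) (has_half ns) (boxseq ns).
have := card_HA_add_nonhalf; have := count_in_T.
rewrite /card_HL size_filter; case: (size B1) nonhalf_le => [|n] /=; first lia.
rewrite mulSn; lia.
Qed.

End PermArray.

Theorem mainTheorem6 (ns : seq nat) (A : seq nat -> bool)
    (k : nat) (phi : seq nat -> seq nat) :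
  2 <= size ns ->
  all (fun x => 2 <= x) ns ->
  is_perm_array ns A k phi ->
  ((card_HA ns A)%:Z - (card_HL ns k)%:Z < (parray_order ns k)%:Z - 1)%R ->
  exists c : seq int, size c = size ns /\ window_has_repeat ns A c.
Proof.
move=> _ ns_ge2 pa card_lt.
have order_gt0 : 0 < parray_order ns k.
  rewrite /parray_order big_seq; apply: prodn_cond_gt0 => x /mem_take /(allP ns_ge2) /ltnW //.
have : ~~ uniq [seq toroidal ns p.1 p.2 | p <- nonhalf_pairs ns A].
  apply/negP => /(card_HL_add_le pa); rewrite size_boxseq -/(parray_order ns k).
  by move: card_lt; lia.
case/(collision_of_not_uniq_map (uniq_nonhalf_pairs ns A)) => -[a w] [[a' w'] []].
exact: window_repeat_of_collision.
Qed.
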